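(* For all natural numbers $n,b\ge1$, $$s\big(2n^2b^2+2nb+1,\,2nb^2\big)=\frac{2n^2b^2-3nb^2+1}{12nb^2}.$$
   Context: For an integer $q\neq0$ and an integer $p$ (or residue class of $p$ mod $q$), the Dedekind sum is $$s(p,q)=\sum_{i=1}^{|q|}\Big(\Big(\frac{i}{q}\Big)\Big)\Big(\Big(\frac{pi}{q}\Big)\Big),$$ where $((x))=0$ if $x\in\mathbb{Z}$ and $((x))=x-\lfloor x\rfloor-\tfrac12$ otherwise. *)

From mathcomp Require Import all_boot all_order all_algebra.
Set Implicit Arguments. Unset Strict Implicit. Unset Printing Implicit Defensive.
Import Order.TTheory GRing.Theory Num.Theory.
Local Open Scope ring_scope.

Definition sawtooth (x : rat) : rat :=
  if x \is a Num.int then 0 else x - (Num.floor x)%:~R - 1 / 2.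

Definition dedekind_sum (p q : int) : rat :=
  \sum_(1 <= i < `|q|%N.+1) sawtooth (i%:~R / q%:~R) * sawtooth ((p * i%:Z)%:~R / q%:~R).

From mathcomp Require Import all_boot all_order all_algebra.
From mathcomp Require Import ring zify.
Import Order.TTheory GRing.Theory Num.Theory.
Local Open Scope ring_scope.

(* With m = 2nb the modulus is q = m b, b divides m, and the numerator is congruent
   to m + 1 modulo q; since s(p, q) only depends on p mod q, it suffices to evaluate
   s(m + 1, m b).  Writing a residue as a + m v with a < m and v < b,
   multiplication by m + 1 modulo m b fixes a and rotates the digit v to
   (a + v) mod b.  As m + 1 is coprime to m b, s(m + 1, m b) is the sum of products
   of centred residues (i/q - 1/2)((m+1) i mod q / q - 1/2), minus 1/4 for i = 0;
   for fixed a the sum over the rotated digit is an explicit polynomial in a and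
   a mod b, and the remaining sums are sums of powers. *)

Lemma sawtoothDz (x : rat) (z : int) : sawtooth (x + z%:~R) = sawtooth x.
Proof.
rewrite /sawtooth rpredDr ?intr_int // floorDrz ?intr_int // intrKfloor rmorphD /=.
by case: ifP => // _; ring.
Qed.

Lemma sawtooth_frac (j q : nat) : (j < q)%N ->
  sawtooth (j%:R / q%:R) = if j == 0%N then 0 else j%:R / q%:R - 1 / 2.
Proof.
move=> jq; have q_gt0 : (0 < q)%N by apply: leq_ltn_trans jq.
have floor0 : Num.floor (j%:R / q%:R : rat) = 0.
  apply: floor_def; rewrite add0r divr_ge0 ?ler0n //=.
  by rewrite ltr_pdivrMr ?ltr0n // mul1r ltr_nat.
rewrite /sawtooth intrEfloor floor0 subr0.
have [->|j_neq0] := eqVneq j 0%N; first by rewrite mul0r eqxx.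
by rewrite eq_sym mulf_eq0 invr_eq0 !pnatr_eq0 (negbTE j_neq0) eqn0Ngt q_gt0.
Qed.

Lemma dedekind_sum_periodic (p k q : int) : dedekind_sum (p + k * q) q = dedekind_sum p q.
Proof.
have [->|q_neq0] := eqVneq q 0; first by rewrite /dedekind_sum !big_geq.
apply: eq_bigr => i _; congr (_ * _).
have -> : ((p + k * q) * i%:Z)%:~R / q%:~R = (p * i%:Z)%:~R / q%:~R + (k * i%:Z)%:~R :> rat.
  by rewrite !rmorphM rmorphD /= rmorphM /=; field; rewrite intr_eq0.
exact: sawtoothDz.
Qed.

Lemma dedekind_sum_centered (p q : nat) : (0 < q)%N -> coprime p q ->
  dedekind_sum p q =
  \sum_(0 <= i < q) (i%:R / q%:R - 1 / 2) * ((p * i %% q)%N%:R / q%:R - 1 / 2) - 1 / 4.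
Proof.
move=> q_gt0 co_pq; rewrite /dedekind_sum absz_nat big_nat_recr //= (big_ltn q_gt0).
have -> : sawtooth (q%:~R / q%:~R) = 0.
  by rewrite divff ?intr_eq0 -?lt0n // /sawtooth rpred1.
have cancel_quarter (x : rat) : 1 / 2 * (1 / 2) + x - 1 / 4 = x by field.
rewrite mul0r addr0 muln0 mod0n !mul0r add0r mulrNN cancel_quarter.
apply: eq_big_nat => i /andP [i_gt0 iq].
have pi_mod_neq0 : (p * i %% q != 0)%N.
  rewrite -/(dvdn q (p * i)) Gauss_dvdr 1?coprime_sym //.
  by apply/negP => /(dvdn_leq i_gt0); rewrite leqNgt iq.
have -> : (p%:Z * i%:Z)%:~R / q%:~R
    = (p * i %% q)%N%:R / q%:R + ((p * i %/ q)%N%:Z)%:~R :> rat.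
  rewrite -PoszM {1}(divn_eq (p * i) q) -!pmulrn natrD natrM.
  by field; rewrite pnatr_eq0 -lt0n.
rewrite sawtoothDz -!pmulrn !sawtooth_frac ?ltn_pmod // (negbTE pi_mod_neq0).
by rewrite eqn0Ngt i_gt0.
Qed.

Lemma sum_nat_id N : \sum_(0 <= t < N) (t%:R : rat) = N%:R * (N%:R - 1) / 2.
Proof.
elim: N => [|N IH]; first by rewrite big_nil; field.
by rewrite big_nat_recr //= IH -addn1 natrD; field.
Qed.

Lemma sum_nat_sq N :
  \sum_(0 <= t < N) (t%:R : rat) ^+ 2 = N%:R * (N%:R - 1) * (2 * N%:R - 1) / 6.
Proof.
elim: N => [|N IH]; first by rewrite big_nil; field.
by rewrite big_nat_recr //= IH -addn1 natrD; field.
Qed.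

Lemma sum_nat_quadratic N (F : nat -> rat) A B C :
  (forall t, F t = A + B * t%:R + C * t%:R ^+ 2) ->
  \sum_(0 <= t < N) F t = A * N%:R + B * (N%:R * (N%:R - 1) / 2)
     + C * (N%:R * (N%:R - 1) * (2 * N%:R - 1) / 6).
Proof.
move=> F_quad; under eq_bigr => t _ do rewrite F_quad.
rewrite !big_split /= -!mulr_sumr sum_nat_id sum_nat_sq sumr_const_nat subn0.
by rewrite -mulr_natr; ring.
Qed.

Lemma sum_nat_mul_split A B (F : nat -> rat) :
  \sum_(0 <= i < A * B) F i = \sum_(0 <= v < B) \sum_(0 <= u < A) F (u + A * v)%N.
Proof.
elim: B => [|B IH]; first by rewrite muln0 !big_nil.
rewrite big_nat_recr //= -IH mulnS addnC (big_cat_nat _ (leq_addr _ _)) //=.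
by congr (_ + _); rewrite -{1}(add0n (A * B)%N) big_addn addKn.
Qed.

Lemma sum_nat_modn b k (g : nat -> rat) :
  \sum_(0 <= a < b * k) g (a %% b)%N = k%:R * \sum_(0 <= c < b) g c.
Proof.
rewrite sum_nat_mul_split.
under eq_bigr => v _ do under eq_big_nat => u /andP [_ ub] do
  rewrite addnC mulnC modnMDl modn_small //.
by rewrite sumr_const_nat subn0 mulr_natl.
Qed.

Section RotationSums.

Variables (b c : nat).
Hypothesis c_lt_b : (c < b)%N.

Lemma sum_rot_split (G : nat -> nat -> rat) :
  \sum_(0 <= v < b) G v ((c + v) %% b)%N =
  \sum_(0 <= v < b - c) G v (c + v)%N + \sum_(0 <= t < c) G (t + (b - c))%N t.
Proof.
have c_le_b := ltnW c_lt_b.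
rewrite (big_cat_nat (n := b - c) (leq0n _) (leq_subr c b)) /=; congr (_ + _).
  apply: eq_big_nat => v /andP [_ vbc].
  by rewrite modn_small // -ltn_subRL.
rewrite -{1}(add0n (b - c)%N) big_addn (subKn c_le_b).
apply: eq_big_nat => t /andP [_ tc].
rewrite addnCA (subnKC c_le_b) modnDr modn_small //.
exact: ltn_trans tc c_lt_b.
Qed.

Lemma sum_rot : \sum_(0 <= v < b) (((c + v) %% b)%N%:R : rat) = b%:R * (b%:R - 1) / 2.
Proof.
rewrite (sum_rot_split (fun _ w => w%:R)).
rewrite (sum_nat_quadratic _ _ (c%:R) 1 0); last by move=> t; rewrite natrD; ring.
rewrite (sum_nat_quadratic _ _ 0 1 0); last by move=> t; ring.
by rewrite (natrB _ (ltnW c_lt_b)); field.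
Qed.

Lemma sum_mul_rot :
  \sum_(0 <= v < b) (v%:R * ((c + v) %% b)%N%:R : rat) =
  b%:R * (b%:R - 1) * (2 * b%:R - 1) / 6 - b%:R * c%:R * (b%:R - c%:R) / 2.
Proof.
rewrite (sum_rot_split (fun v w => v%:R * w%:R)).
rewrite (sum_nat_quadratic _ _ 0 (c%:R) 1); last by move=> t; rewrite natrD; ring.
rewrite (sum_nat_quadratic _ _ 0 ((b - c)%N%:R) 1); last by move=> t; rewrite natrD; ring.
by rewrite (natrB _ (ltnW c_lt_b)); field.
Qed.

Lemma sum_affine_mul_rot (y z : rat) :
  \sum_(0 <= v < b) ((y + z * v%:R) * (y + z * ((c + v) %% b)%N%:R)) =
  b%:R * y ^+ 2 + y * z * (b%:R * (b%:R - 1)) +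
  z ^+ 2 * (b%:R * (b%:R - 1) * (2 * b%:R - 1) / 6 - b%:R * c%:R * (b%:R - c%:R) / 2).
Proof.
have expand v : (y + z * v%:R) * (y + z * ((c + v) %% b)%N%:R) =
    y ^+ 2 + y * z * v%:R + y * z * ((c + v) %% b)%N%:R
    + z ^+ 2 * (v%:R * ((c + v) %% b)%N%:R) by ring.
under eq_bigr => v _ do rewrite expand.
rewrite !big_split /= -!mulr_sumr sum_rot sum_mul_rot sumr_const_nat subn0.
rewrite (sum_nat_quadratic _ _ 0 1 0); last by move=> t; ring.
by rewrite -mulr_natl; field.
Qed.

End RotationSums.

Lemma mulSn_modn_mul (m b a v : nat) : (b %| m)%N -> (a < m)%N -> (v < b)%N ->
  ((m.+1 * (a + m * v)) %% (m * b) = a + m * ((a + v) %% b))%N.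
Proof.
move=> /dvdnP [k def_m] am vb.
move: (divn_eq (a + v) b) (ltn_pmod (a + v) (leq_ltn_trans (leq0n v) vb)).
move: ((a + v) %/ b)%N ((a + v) %% b)%N => d r def_av r_lt_b.
have -> : (m.+1 * (a + m * v) = (d + k * v) * (m * b) + (a + m * r))%N.
  by rewrite def_m; nia.
rewrite modnMDl modn_small // def_m; nia.
Qed.

Lemma sum_centered_mulSn (m b : nat) : (0 < m)%N -> (b %| m)%N ->
  \sum_(0 <= i < m * b) (i%:R / (m * b)%N%:R - 1 / 2)
      * ((m.+1 * i %% (m * b))%N%:R / (m * b)%N%:R - 1 / 2)
  = (m%:R ^+ 2 + 2) / (12 * m%:R * b%:R) :> rat.
Proof.
move=> m_gt0 b_dvd_m; have b_gt0 : (0 < b)%N := dvdn_gt0 m_gt0 b_dvd_m.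
have [k def_m] := dvdnP b_dvd_m.
have m_neq0 : (m%:R : rat) != 0 by rewrite pnatr_eq0 -lt0n.
have b_neq0 : (b%:R : rat) != 0 by rewrite pnatr_eq0 -lt0n.
set Q : rat := (m * b)%N%:R.
pose S2 : rat := b%:R * (b%:R - 1) * (2 * b%:R - 1) / 6.
pose q2 (a : nat) : rat := b%:R * (a%:R - Q / 2) ^+ 2
  + (a%:R - Q / 2) * m%:R * (b%:R * (b%:R - 1)) + m%:R ^+ 2 * S2.
pose r2 (c : nat) : rat := c%:R * (b%:R - c%:R).
have inner a : (a < m)%N ->
    \sum_(0 <= v < b) ((a + m * v)%N%:R / Q - 1 / 2)
      * ((m.+1 * (a + m * v) %% (m * b))%N%:R / Q - 1 / 2)
    = (q2 a - m%:R ^+ 2 * b%:R / 2 * r2 (a %% b)%N) / Q ^+ 2.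
  move=> am.
  transitivity ((\sum_(0 <= v < b) (a%:R - Q / 2 + m%:R * v%:R)
      * (a%:R - Q / 2 + m%:R * ((a %% b + v) %% b)%N%:R)) / Q ^+ 2).
    rewrite mulr_suml; apply: eq_big_nat => v /andP [_ vb].
    rewrite mulSn_modn_mul // modnDml /Q !(natrD, natrM).
    by field; rewrite m_neq0 b_neq0.
  by rewrite sum_affine_mul_rot ?ltn_pmod // /q2 /r2 /S2; congr (_ / _); ring.
rewrite sum_nat_mul_split exchange_big_nat /=.
under eq_big_nat => a /andP [_ am] do rewrite inner //.
have periodic : \sum_(0 <= a < m) r2 (a %% b)%N = k%:R * \sum_(0 <= c < b) r2 c.
  by rewrite def_m mulnC sum_nat_modn.
rewrite -mulr_suml sumrB -mulr_sumr periodic.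
rewrite (sum_nat_quadratic _ _ 0 b%:R (-1)); last by move=> c; rewrite /r2; ring.
rewrite (sum_nat_quadratic _ _ (b%:R * Q ^+ 2 / 4 - Q / 2 * m%:R * (b%:R * (b%:R - 1))
    + m%:R ^+ 2 * S2) (m%:R * (b%:R * (b%:R - 1)) - b%:R * Q) b%:R); last first.
  by move=> a; rewrite /q2; field.
have k_gt0 : (0 < k)%N by move: m_gt0; rewrite def_m muln_gt0 => /andP [].
rewrite /S2 /Q def_m !natrM.
by field; rewrite b_neq0 pnatr_eq0 -lt0n k_gt0.
Qed.

Lemma dedekind_sum_mulSn (m b : nat) : (0 < m)%N -> (b %| m)%N ->
  dedekind_sum m.+1 (m * b) = (m%:R ^+ 2 - 3 * m%:R * b%:R + 2) / (12 * m%:R * b%:R).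
Proof.
move=> m_gt0 b_dvd_m; have b_gt0 : (0 < b)%N := dvdn_gt0 m_gt0 b_dvd_m.
have co_Sm_mb : coprime m.+1 (m * b).
  by rewrite coprimeMr coprimeSn (coprime_dvdr b_dvd_m (coprimeSn m)).
rewrite dedekind_sum_centered ?muln_gt0 ?m_gt0 // sum_centered_mulSn //.
by field; rewrite !pnatr_eq0 -!lt0n m_gt0 b_gt0.
Qed.

Theorem corollary2 (n b : nat) (hn : (1 <= n)%N) (hb : (1 <= b)%N) :
  dedekind_sum (2 * n%:Z ^+ 2 * b%:Z ^+ 2 + 2 * n%:Z * b%:Z + 1) (2 * n%:Z * b%:Z ^+ 2)
  = (2 * n%:~R ^+ 2 * b%:~R ^+ 2 - 3 * n%:~R * b%:~R ^+ 2 + 1) / (12 * n%:~R * b%:~R ^+ 2 : rat).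
Proof.
set m := (2 * n * b)%N.
have -> : 2 * n%:Z ^+ 2 * b%:Z ^+ 2 + 2 * n%:Z * b%:Z + 1 = m.+1%:Z + n%:Z * (m * b)%N%:Z.
  by rewrite /m; lia.
have -> : 2 * n%:Z * b%:Z ^+ 2 = (m * b)%N%:Z by rewrite /m; lia.
rewrite dedekind_sum_periodic dedekind_sum_mulSn ?muln_gt0 ?hn ?hb ?dvdn_mull //.
rewrite -!pmulrn /m !natrM.
by field; rewrite !pnatr_eq0 -!lt0n hn hb.
Qed.
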